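(* Let $C \ge 2$, $d \ge 1$, $I \ge 1$ and $J$ be integers with $1 \le J \le C$. Let $\{\xi_i\}_{i=1}^m$ be a sequence of random variables and $\{\mathbf{y}_i\}_{i=1}^m$ a sequence of random vectors in $\mathbb{R}^d$, each $\mathbf{y}_i$ depending on $\xi_1,\dots,\xi_i$, such that $\mathbb{E}_{\xi_i}[\mathbf{y}_i \mid \xi_1,\dots,\xi_{i-1}] = \mathbf{e}_i$ (so $\{\mathbf{y}_i-\mathbf{e}_i\}$ is a martingale difference sequence with respect to the filtration generated by $\{\xi_i\}$) and $\mathbb{E}_{\xi_i}[\|\mathbf{y}_i-\mathbf{e}_i\|^2 \mid \xi_1,\dots,\xi_{i-1}] \le \delta^2$ for all $i$, for a fixed constant $\delta>0$. Let $\mathbf{x}_1,\dots,\mathbf{x}_C \in \mathbb{R}^d$ be fixed vectors with population mean $\overline{\mathbf{x}} = \frac{1}{C}\sum_{k=1}^C \mathbf{x}_k$ and population variance $\nu^2 = \frac{1}{C}\sum_{k=1}^C \|\mathbf{x}_k-\overline{\mathbf{x}}\|^2$, and let $\psi=(\psi_1,\dots,\psi_C)$ be a uniformly random permutation of $\{1,\dots,C\}$ (i.e. $\mathbf{x}_{\psi_1},\mathbf{x}_{\psi_2},\dots$ are drawn from the population by sampling without replacement). For $1\le c\le J$, $0 \le i \le I-1$ and $1\le k\le c$ define $$p_{c,i}(k) = \begin{cases} I-1, & k \le c-1,\\ i-1, & k = c.\end{cases}$$ Then $$\sum_{c=1}^J \sum_{i=0}^{I-1} \mathbb{E}\left\|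 \sum_{k=1}^{c} \sum_{j=0}^{p_{c,i}(k)} (\mathbf{x}_{\psi_k} - \overline{\mathbf{x}})\right\|^2 \le \frac{1}{2} J^2 I^3 \nu^2 .$$
   Context: $\|\cdot\|$ is the Euclidean norm. An inner sum $\sum_{j=0}^{p}$ with $p=-1$ (which occurs for $k=c$, $i=0$) is empty and equals $0$. The expectation is over the random permutation $\psi$. The martingale vectors were denoted $\mathbf{x}_i$ in the paper; they are renamed $\mathbf{y}_i$ here only to avoid a clash with the population vectors. *)

From HB Require Import structures.
From mathcomp Require Import all_boot all_order all_algebra all_fingroup.
From mathcomp Require Import reals.
Set Implicit Arguments. Unset Strict Implicit. Unset Printing Implicit Defensive.
Import Order.TTheory GRing.Theory Num.Theory.
Local Open Scope ring_scope.

Definition sqnorm (R : realType) (d : nat) (v : 'rV[R]_d) : R :=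
  \sum_(l < d) (v 0 l) ^+ 2.

Definition xbar (R : realType) (C d : nat) (x : 'I_C -> 'rV[R]_d) : 'rV[R]_d :=
  (C%:R)^-1 *: \sum_(k < C) x k.

Definition nu2 (R : realType) (C d : nat) (x : 'I_C -> 'rV[R]_d) : R :=
  (C%:R)^-1 * \sum_(k < C) sqnorm (x k - xbar x).

Definition Eperm (R : realType) (C : nat) (f : {perm 'I_C} -> R) : R :=
  (C`!%:R)^-1 * \sum_(s : {perm 'I_C}) f s.

(* p_{c,i}(k) for 1 <= k <= c (k 1-indexed), an integer (may be -1) *)
Definition pci (I c i k : nat) : int :=
  if (k <= c.-1)%N then (I%:Z - 1) else (i%:Z - 1).

(* number of terms of the inner sum \sum_{j=0}^{p}: p+1 (0 when p = -1) *)
Definition nterms (p : int) : nat := absz (p + 1).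

From HB Require Import structures.
From mathcomp Require Import all_boot all_order all_algebra all_fingroup.
From mathcomp Require Import reals ring lra zify.
Import Order.TTheory GRing.Theory Num.Theory.
Set Implicit Arguments. Unset Strict Implicit.
Local Open Scope ring_scope.

(* Expanding the square, the expectation of a nonnegatively weighted sum of
   sampled centred vectors splits into diagonal and cross terms.  Each psi_k is
   uniform, so the diagonal terms contribute (sum_k w_k^2) nu^2; the centred
   vectors sum to zero, so two distinct draws without replacement are negatively
   correlated and the cross terms are nonpositive.  With w_k the number of inner
   summands, the (c, i) term is thus at most ((c - 1) I^2 + i^2) nu^2, and
   summing with 2 sum_(i < I) i^2 <= I^3 gives the bound. *)

Section UniformPermutation.
Variables (R : realType) (C : nat).
Implicit Types (f g : {perm 'I_C} -> R).

Lemma Eperm_ext f g : f =1 g -> Eperm f = Eperm g.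
Proof. by move=> fg; rewrite /Eperm; congr (_ * _); apply: eq_bigr => s _. Qed.

Lemma Eperm_mull (t : {perm 'I_C}) f : Eperm f = Eperm (fun s => f (t * s)%g).
Proof. by rewrite /Eperm; congr (_ * _); apply: (reindex_inj (mulgI t)). Qed.

Lemma Eperm_const (a : R) : Eperm (fun _ : {perm 'I_C} => a) = a.
Proof.
rewrite /Eperm sumr_const card_Sn -[a *+ _]mulr_natl mulrA mulVf ?mul1r //.
by rewrite pnatr_eq0 -lt0n fact_gt0.
Qed.

Lemma Eperm_sum (I : finType) (F : I -> {perm 'I_C} -> R) :
  Eperm (fun s => \sum_i F i s) = \sum_i Eperm (F i).
Proof. by rewrite /Eperm exchange_big mulr_sumr. Qed.

Lemma EpermZ (a : R) f : Eperm (fun s => a * f s) = a * Eperm f.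
Proof. by rewrite /Eperm -mulr_sumr mulrCA. Qed.

Lemma Eperm_ge0 f : (forall s, 0 <= f s) -> 0 <= Eperm f.
Proof. by move=> f_ge0; rewrite mulr_ge0 ?invr_ge0 ?ler0n ?sumr_ge0. Qed.

Lemma Eperm_eval (F : 'I_C -> R) (a : 'I_C) :
  Eperm (fun s => F (s a)) = C%:R^-1 * \sum_p F p.
Proof.
have Eperm_a a' : Eperm (fun s => F (s a')) = Eperm (fun s => F (s a)).
  by rewrite (Eperm_mull (tperm a a')); apply: Eperm_ext => s; rewrite permM tpermR.
have : \sum_(a' < C) Eperm (fun s => F (s a')) = \sum_p F p.
  rewrite -Eperm_sum -[RHS]Eperm_const; apply: Eperm_ext => s.
  by rewrite [RHS](reindex_inj (@perm_inj _ s)).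
under eq_bigr do rewrite Eperm_a.
rewrite sumr_const card_ord => <-.
have C_gt0 : (0 < C)%N := leq_ltn_trans (leq0n a) (ltn_ord a).
by rewrite -[Eperm _ *+ C]mulr_natl mulrA mulVf ?mul1r // pnatr_eq0 -lt0n.
Qed.

(* Among the draws s b with b != a, all positions b are exchangeable, while
   summing over every b (including a) gives zero. *)
Lemma Eperm_eval2_le0 (F : 'I_C -> 'I_C -> R) :
  (forall p, 0 <= F p p) -> (forall p, \sum_q F p q = 0) ->
  forall a b, a != b -> Eperm (fun s => F (s a) (s b)) <= 0.
Proof.
move=> F_diag_ge0 F_row0 a b neq_ab.
have Eperm_b b' : b' != a ->
    Eperm (fun s => F (s a) (s b')) = Eperm (fun s => F (s a) (s b)).
  move=> neq_b'a; rewrite (Eperm_mull (tperm b b')); apply: Eperm_ext => s.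
  by rewrite !permM tpermR tpermD // eq_sym.
have : \sum_b' Eperm (fun s => F (s a) (s b')) = 0.
  rewrite -Eperm_sum -[RHS](Eperm_const 0); apply: Eperm_ext => s.
  by rewrite [RHS](_ : 0 = \sum_q F (s a) q) // [RHS](reindex_inj (@perm_inj _ s)).
rewrite (bigD1 a) //=; under eq_bigr => b' /Eperm_b -> do [].
rewrite sumr_const cardC1 card_ord.
have Ediag_ge0 : 0 <= Eperm (fun s => F (s a) (s a)).
  by apply: Eperm_ge0 => s; apply: F_diag_ge0.
have C1_gt0 : (0 < C.-1)%N.
  by rewrite -(card_ord C) -(cardC1 a); apply/card_gt0P; exists b; rewrite !inE eq_sym.
by rewrite -(pmulrn_lle0 _ C1_gt0); lra.
Qed.

End UniformPermutation.

Section WeightedSample.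
Variables (R : realType) (d : nat).

Definition dotv (u v : 'rV[R]_d) : R := \sum_(l < d) u 0 l * v 0 l.

Lemma sqnorm_ge0 (v : 'rV[R]_d) : 0 <= sqnorm v.
Proof. by rewrite sumr_ge0 // => l _; rewrite sqr_ge0. Qed.

Lemma dotvv (v : 'rV[R]_d) : dotv v v = sqnorm v.
Proof. by apply: eq_bigr => l _; rewrite expr2. Qed.

Lemma dotv_sumr (I : finType) (u : 'rV[R]_d) (v : I -> 'rV[R]_d) :
  dotv u (\sum_i v i) = \sum_i dotv u (v i).
Proof.
rewrite /dotv exchange_big; apply: eq_bigr => l _.
by rewrite summxE mulr_sumr.
Qed.

Lemma sqnorm_sumZ (I : finType) (w : I -> R) (u : I -> 'rV[R]_d) :
  sqnorm (\sum_i w i *: u i) = \sum_a \sum_b w a * w b * dotv (u a) (u b).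
Proof.
rewrite /sqnorm /dotv.
under eq_bigr => l _ do rewrite summxE expr2 big_distrlr /=.
rewrite exchange_big; apply: eq_bigr => a _.
rewrite exchange_big; apply: eq_bigr => b _.
rewrite mulr_sumr; apply: eq_bigr => l _; rewrite !mxE; ring.
Qed.

Lemma Eperm_sqnorm_sumZ_le (C : nat) (y : 'I_C -> 'rV[R]_d) (w : 'I_C -> R) :
  \sum_p y p = 0 -> (forall k, 0 <= w k) ->
  Eperm (fun s => sqnorm (\sum_k w k *: y (s k)))
    <= (\sum_k w k ^+ 2) * (C%:R^-1 * \sum_p sqnorm (y p)).
Proof.
move=> y_sum0 w_ge0.
rewrite (Eperm_ext (fun s => sqnorm_sumZ w (fun k => y (s k)))) Eperm_sum.
rewrite mulr_suml; apply: ler_sum => a _.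
rewrite Eperm_sum (bigD1 a) //= EpermZ -expr2.
under Eperm_ext => s do rewrite dotvv.
rewrite (Eperm_eval (fun p => sqnorm (y p))) -[leRHS]addr0 lerD2l.
apply: sumr_le0 => b neq_ba; rewrite EpermZ.
apply: mulr_ge0_le0; first by rewrite mulr_ge0.
apply: (Eperm_eval2_le0 (F := fun p q => dotv (y p) (y q))); last by rewrite eq_sym.
- by move=> p; rewrite dotvv sqnorm_ge0.
- by move=> p; rewrite -dotv_sumr y_sum0 /dotv big1 // => l _; rewrite mxE mulr0.
Qed.

Lemma sumr_sub_xbar (C : nat) (x : 'I_C -> 'rV[R]_d) :
  (0 < C)%N -> \sum_k (x k - xbar x) = 0.
Proof.
move=> C_gt0; rewrite sumrB sumr_const card_ord /xbar -scaler_nat scalerA.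
by rewrite mulfV ?scale1r ?subrr // pnatr_eq0 -lt0n.
Qed.

Lemma nu2_ge0 (C : nat) (x : 'I_C -> 'rV[R]_d) : 0 <= nu2 x.
Proof. by rewrite mulr_ge0 ?invr_ge0 ?ler0n ?sumr_ge0 // => k _; apply: sqnorm_ge0. Qed.

End WeightedSample.

Definition summand_count (I c i k : nat) : nat :=
  if (k < c)%N then nterms (pci I c i k.+1) else 0.

Lemma sum_nterms_pci (V : zmodType) (C I c i : nat) (v : 'I_C -> V) :
  \sum_(k < C | (k < c)%N) \sum_(j < nterms (pci I c i k.+1)) v k
    = \sum_k v k *+ summand_count I c i k.
Proof.
rewrite big_mkcond; apply: eq_bigr => k _; rewrite /summand_count.
by case: ifP => _; rewrite ?mulr0n // sumr_const card_ord.
Qed.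

Lemma sum_summand_count_sq (I C c i : nat) :
  (0 < c <= C)%N ->
  (\sum_(k < C) summand_count I c i k ^ 2 = c.-1 * I ^ 2 + i ^ 2)%N.
Proof.
case: c => [//|c] /= c_le_C.
rewrite -(big_mkord xpredT (fun k => summand_count I c.+1 i k ^ 2)%N).
rewrite (big_cat_nat (n := c.+1)) //= [X in (_ + X)%N]big1_seq ?addn0; last first.
  by move=> k; rewrite mem_index_iota /summand_count => /andP[_ /andP[/leq_gtF ->]].
rewrite big_nat_recr //= /summand_count /nterms /pci ltnSn ltnn subrK /=.
rewrite (eq_big_nat _ _ (F2 := fun _ => I ^ 2)%N) ?sum_nat_const_nat ?subn0 //.
by move=> k /andP[_ lt_kc]; rewrite ltnS ltnW // lt_kc subrK.
Qed.

Lemma sum_sq_le (I : nat) : (2 * \sum_(0 <= i < I) i ^ 2 <= I ^ 3)%N.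
Proof.
elim: I => [|I IH]; first by rewrite big_geq.
by rewrite big_nat_recr //=; nia.
Qed.

Lemma sum_counts_le (I J : nat) :
  (2 * \sum_(1 <= c < J.+1) \sum_(0 <= i < I) (c.-1 * I ^ 2 + i ^ 2)
     <= J ^ 2 * I ^ 3)%N.
Proof.
have sq_le := sum_sq_le I.
elim: J => [|J IH]; first by rewrite big_geq.
rewrite big_nat_recr //= big_split /= sum_nat_const_nat /=.
move: IH; set T := \sum_(1 <= c < J.+1) _; nia.
Qed.

Theorem lemma4 (R : realType) (C d I J : nat)
  (hC : (2 <= C)%N) (hd : (1 <= d)%N) (hI : (1 <= I)%N)
  (hJ1 : (1 <= J)%N) (hJC : (J <= C)%N)
  (x : 'I_C -> 'rV[R]_d) :
  \sum_(1 <= c < J.+1) \sum_(0 <= i < I)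
     Eperm (fun s : {perm 'I_C} =>
       sqnorm (\sum_(k < C | (k < c)%N)
                 \sum_(j < nterms (pci I c i k.+1)) (x (s k) - xbar x)))
  <= 2^-1 * (J%:R ^+ 2) * (I%:R ^+ 3) * nu2 x.
Proof.
have term_le c i : (0 < c <= C)%N ->
    Eperm (fun s : {perm 'I_C} =>
      sqnorm (\sum_(k < C | (k < c)%N)
                \sum_(j < nterms (pci I c i k.+1)) (x (s k) - xbar x)))
    <= (c.-1 * I ^ 2 + i ^ 2)%N%:R * nu2 x.
  move=> c_range; rewrite -(sum_summand_count_sq I i c_range) natr_sum.
  under [X in _ <= X * _]eq_bigr do rewrite natrX.
  under Eperm_ext => s do rewrite sum_nterms_pci.
  under Eperm_ext => s do under eq_bigr do rewrite -scaler_nat.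
  by apply: Eperm_sqnorm_sumZ_le => [|k]; rewrite ?sumr_sub_xbar ?ler0n //; lia.
apply: le_trans (_ : \sum_(1 <= c < J.+1) \sum_(0 <= i < I)
                       (c.-1 * I ^ 2 + i ^ 2)%N%:R * nu2 x <= _).
  rewrite !big_nat; apply: ler_sum => c c_range; apply: ler_sum => i _.
  by apply: term_le; lia.
under eq_bigr do rewrite -mulr_suml -natr_sum.
rewrite -mulr_suml -natr_sum; apply: ler_wpM2r; first exact: nu2_ge0.
have := sum_counts_le I J; rewrite -(ler_nat R) !natrM; lra.
Qed.
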